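(* For every integer $n$, \[ 25\sum_{k=1}^n F_k^{\,4}=F_{2n+1}L_{n-1}L_{n+2}+6n+3\,. \]
   Context: $F_i$ and $L_i$ denote the Fibonacci and Lucas numbers, defined for all $i\in\mathbb{Z}$ by $F_i=F_{i-1}+F_{i-2}$, $F_0=0$, $F_1=1$, and $L_i=L_{i-1}+L_{i-2}$, $L_0=2$, $L_1=1$; equivalently $F_{-i}=(-1)^{i-1}F_i$ and $L_{-i}=(-1)^iL_i$. Summation convention for an arbitrary integer upper limit: $\sum_{k=a}^{a-1} f(k)=0$, and for $n<a-1$, $\sum_{k=a}^{n} f(k) = -\sum_{k=n+1}^{a-1} f(k)$. *)

From Stdlib Require Import ZArith List.
Open Scope Z_scope.

Fixpoint fibL_pair (n : nat) : Z * Z * Z * Z :=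
  (* returns (F_n, F_{n+1}, L_n, L_{n+1}) *)
  match n with
  | O => (0, 1, 2, 1)
  | S m => let '(f0, f1, l0, l1) := fibL_pair m in (f1, f0 + f1, l1, l0 + l1)
  end.

Definition fibN (n : nat) : Z := let '(f, _, _, _) := fibL_pair n in f.
Definition lucN (n : nat) : Z := let '(_, _, l, _) := fibL_pair n in l.

Definition F (i : Z) : Z :=
  if 0 <=? i then fibN (Z.to_nat i)
  else (-1) ^ (- i - 1) * fibN (Z.to_nat (- i)).
Definition L (i : Z) : Z :=
  if 0 <=? i then lucN (Z.to_nat i)
  else (-1) ^ (- i) * lucN (Z.to_nat (- i)).

Fixpoint sum_from (f : Z -> Z) (a : Z) (len : nat) : Z :=
  match len with
  | O => 0
  | S m => f a + sum_from f (a + 1) m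
  end.

(* sum_{k=a}^{n} f k with the convention: empty for n = a-1, and
   for n < a-1 it equals - sum_{k=n+1}^{a-1} f k. *)
Definition sumZ (a n : Z) (f : Z -> Z) : Z :=
  if a - 1 <=? n then sum_from f a (Z.to_nat (n - a + 1))
  else - sum_from f (n + 1) (Z.to_nat (a - 1 - n)).

(* Both sides vanish at n = 0, so it suffices that their differences at n agree.
   Writing a = F n, b = F (n+1), the right-hand side is
   (a^2+b^2)(3a-b)(a+3b) + 6n + 3, and the difference of the cubic part at n and
   at n - 1 (where (a, b) becomes (b - a, a)) is the ring identity
   25 a^4 - 6 (b^2 - ab - a^2)^2; Cassini's identity makes the square equal to 1,
   and the 6 is absorbed by the linear term.  The sign conventions for negative
   indices keep the recurrence valid on all of Z, so every identity used here,
   and the telescoping itself, holds for negative n as well. *)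

From Stdlib Require Import ZArith Lia.
Open Scope Z_scope.

Lemma fibN_SS k : fibN (S (S k)) = fibN (S k) + fibN k.
Proof. unfold fibN; simpl; destruct (fibL_pair k) as [[[a b] c] d]; ring. Qed.

Lemma lucN_SS k : lucN (S (S k)) = lucN (S k) + lucN k.
Proof. unfold lucN; simpl; destruct (fibL_pair k) as [[[a b] c] d]; ring. Qed.

Lemma lucN_S_fibN k : lucN (S k) = fibN k + fibN (S (S k)).
Proof.
  enough (H : lucN (S k) = fibN k + fibN (S (S k)) /\
              lucN (S (S k)) = fibN (S k) + fibN (S (S (S k)))) by apply H.
  induction k as [|k [IH1 IH2]]; [split; reflexivity|].
  split; [exact IH2|].
  rewrite lucN_SS, IH1, IH2, (fibN_SS (S (S k))), (fibN_SS (S k)), (fibN_SS k).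
  ring.
Qed.

Lemma F_nonneg m : 0 <= m -> F m = fibN (Z.to_nat m).
Proof. intros Hm; unfold F; destruct (Z.leb_spec 0 m); [reflexivity | lia]. Qed.

Lemma L_nonneg m : 0 <= m -> L m = lucN (Z.to_nat m).
Proof. intros Hm; unfold L; destruct (Z.leb_spec 0 m); [reflexivity | lia]. Qed.

Lemma F_opp m : 0 <= m -> F (- m) = (-1) ^ (m + 1) * F m.
Proof.
  intros Hm; rewrite (F_nonneg m Hm); unfold F.
  destruct (Z.leb_spec 0 (- m)).
  - replace m with 0 by lia; reflexivity.
  - rewrite Z.opp_involutive.
    replace (m + 1) with (m - 1 + 2) by ring.
    rewrite Z.pow_add_r by lia; ring.
Qed.

Lemma L_opp m : 0 <= m -> L (- m) = (-1) ^ m * L m.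
Proof.
  intros Hm; rewrite (L_nonneg m Hm); unfold L.
  destruct (Z.leb_spec 0 (- m)).
  - replace m with 0 by lia; reflexivity.
  - now rewrite Z.opp_involutive.
Qed.

Lemma F_rec_nonneg i : 0 <= i -> F (i + 2) = F (i + 1) + F i.
Proof.
  intros Hi; rewrite !F_nonneg by lia.
  replace (Z.to_nat (i + 2)) with (S (S (Z.to_nat i))) by lia.
  replace (Z.to_nat (i + 1)) with (S (Z.to_nat i)) by lia.
  apply fibN_SS.
Qed.

Lemma F_rec i : F (i + 2) = F (i + 1) + F i.
Proof.
  destruct (Z.le_gt_cases 0 i) as [Hi | Hi]; [now apply F_rec_nonneg|].
  destruct (Z.eq_dec i (-1)) as [-> | Hi1]; [reflexivity|].
  set (j := - i - 2).
  assert (Hj : 0 <= j) by lia.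
  replace (i + 2) with (- j) by lia.
  replace (i + 1) with (- (j + 1)) by lia.
  replace i with (- (j + 2)) by lia.
  rewrite !F_opp, F_rec_nonneg by lia.
  replace (j + 1 + 1) with (j + 2) by ring.
  replace (j + 2 + 1) with (j + 3) by ring.
  rewrite (Z.pow_add_r _ j 1), (Z.pow_add_r _ j 2), (Z.pow_add_r _ j 3) by lia.
  ring.
Qed.

Lemma F_pred n : F (n - 1) = F (n + 1) - F n.
Proof.
  pose proof (F_rec (n - 1)) as H.
  replace (n - 1 + 2) with (n + 1) in H by ring.
  replace (n - 1 + 1) with n in H by ring.
  lia.
Qed.

Lemma L_F_nonneg m : 0 <= m -> L m = F (m - 1) + F (m + 1).
Proof.
  intros Hm; destruct (Z.eq_dec m 0) as [-> | Hm0]; [reflexivity|].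
  rewrite L_nonneg, !F_nonneg by lia.
  replace (Z.to_nat m) with (S (Z.to_nat (m - 1))) by lia.
  replace (Z.to_nat (m + 1)) with (S (S (Z.to_nat (m - 1)))) by lia.
  apply lucN_S_fibN.
Qed.

Lemma L_F i : L i = F (i - 1) + F (i + 1).
Proof.
  destruct (Z.le_gt_cases 0 i) as [Hi | Hi]; [now apply L_F_nonneg|].
  set (m := - i).
  assert (Hm : 0 <= m) by lia.
  replace i with (- m) by lia.
  replace (- m - 1) with (- (m + 1)) by ring.
  replace (- m + 1) with (- (m - 1)) by ring.
  rewrite L_opp, L_F_nonneg, !F_opp by lia.
  replace (m + 1 + 1) with (m + 2) by ring.
  replace (m - 1 + 1) with m by ring.
  rewrite (Z.pow_add_r _ m 2) by lia.
  ring.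
Qed.

Lemma Z_fib_like_ext (u v : Z -> Z) :
  (forall i, u (i + 2) = u (i + 1) + u i) ->
  (forall i, v (i + 2) = v (i + 1) + v i) ->
  u 0 = v 0 -> u 1 = v 1 -> forall i, u i = v i.
Proof.
  intros Hu Hv H0 H1 i.
  enough (H : u i = v i /\ u (i + 1) = v (i + 1)) by apply H.
  induction i as [| i [IH0 IH1] | i [IH0 IH1]] using Z.peano_ind.
  - split; assumption.
  - unfold Z.succ; split; [assumption|].
    replace (i + 1 + 1) with (i + 2) by ring.
    now rewrite Hu, Hv, IH0, IH1.
  - unfold Z.pred; replace (i + -1 + 1) with i by ring; split; [|assumption].
    pose proof (Hu (i + -1)) as Ru; pose proof (Hv (i + -1)) as Rv.
    replace (i + -1 + 2) with (i + 1) in Ru, Rv by ring.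
    replace (i + -1 + 1) with i in Ru, Rv by ring.
    lia.
Qed.

Lemma F_add m k : F (m + k) = F k * F (m + 1) + F (k - 1) * F m.
Proof.
  revert k; apply Z_fib_like_ext.
  - intros i; replace (m + (i + 2)) with (m + i + 2) by ring.
    rewrite F_rec; f_equal; f_equal; ring.
  - intros i; rewrite F_rec.
    replace (i + 2 - 1) with (i + 1) by ring.
    replace (i + 1 - 1) with i by ring.
    rewrite (F_pred i); ring.
  - rewrite Z.add_0_r; change (F m = 0 * F (m + 1) + 1 * F m); ring.
  - change (F (m + 1) = 1 * F (m + 1) + 0 * F m); ring.
Qed.

Lemma F_double_add1 n : F (2 * n + 1) = F n ^ 2 + F (n + 1) ^ 2.
Proof.
  replace (2 * n + 1) with (n + (n + 1)) by ring.
  rewrite F_add; replace (n + 1 - 1) with n by ring; ring.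
Qed.

Lemma L_pred n : L (n - 1) = 3 * F n - F (n + 1).
Proof.
  rewrite L_F, (F_pred (n - 1)); replace (n - 1 + 1) with n by ring.
  rewrite F_pred; ring.
Qed.

Lemma L_add2 n : L (n + 2) = F n + 3 * F (n + 1).
Proof.
  rewrite L_F; replace (n + 2 - 1) with (n + 1) by ring.
  replace (n + 2 + 1) with (n + 1 + 2) by ring.
  rewrite F_rec; replace (n + 1 + 1) with (n + 2) by ring.
  rewrite F_rec; ring.
Qed.

Lemma cassini_sq n : (F (n + 1) ^ 2 - F (n + 1) * F n - F n ^ 2) ^ 2 = 1.
Proof.
  induction n as [| n IH | n IH] using Z.peano_ind; [reflexivity | |].
  - unfold Z.succ; replace (n + 1 + 1) with (n + 2) by ring.
    rewrite F_rec; etransitivity; [| exact IH]; ring.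
  - unfold Z.pred; replace (n + -1) with (n - 1) by ring.
    replace (n - 1 + 1) with n by ring.
    rewrite F_pred; etransitivity; [| exact IH]; ring.
Qed.

Lemma sum_from_S_last f a m : sum_from f a (S m) = sum_from f a m + f (a + Z.of_nat m).
Proof.
  revert a; induction m as [| m IH]; intros a.
  - simpl; rewrite !Z.add_0_r; ring.
  - change (sum_from f a (S (S m))) with (f a + sum_from f (a + 1) (S m)).
    rewrite IH; cbn [sum_from].
    replace (a + 1 + Z.of_nat m) with (a + Z.of_nat (S m)) by lia.
    ring.
Qed.

Lemma sumZ_empty a f : sumZ a (a - 1) f = 0.
Proof.
  unfold sumZ; rewrite Z.leb_refl.
  now replace (a - 1 - a + 1) with 0 by ring.
Qed.

Lemma sumZ_last a n f : sumZ a n f = sumZ a (n - 1) f + f n.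
Proof.
  unfold sumZ.
  destruct (Z.leb_spec (a - 1) n), (Z.leb_spec (a - 1) (n - 1)); try lia.
  - replace (Z.to_nat (n - a + 1)) with (S (Z.to_nat (n - 1 - a + 1))) by lia.
    rewrite sum_from_S_last.
    now replace (a + Z.of_nat (Z.to_nat (n - 1 - a + 1))) with n by lia.
  - replace n with (a - 1) by lia.
    replace (a - 1 - 1 + 1) with (a - 1) by ring.
    replace (a - 1 - (a - 1 - 1)) with 1 by ring.
    replace (a - 1 - a + 1) with 0 by ring.
    simpl; ring.
  - replace (Z.to_nat (a - 1 - (n - 1))) with (S (Z.to_nat (a - 1 - n))) by lia.
    replace (n - 1 + 1) with n by ring.
    simpl; ring.
Qed.

Lemma sumZ_telescope (c : Z) (f g : Z -> Z) a n :
  (forall k, c * f k = g k - g (k - 1)) -> c * sumZ a n f = g n - g (a - 1).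
Proof.
  intros Hfg.
  replace n with (a - 1 + (n - a + 1)) by ring.
  induction (n - a + 1) as [| d IH | d IH] using Z.peano_ind.
  - rewrite Z.add_0_r, sumZ_empty; ring.
  - unfold Z.succ; rewrite sumZ_last, Z.mul_add_distr_l, Hfg.
    replace (a - 1 + (d + 1) - 1) with (a - 1 + d) by ring.
    rewrite IH; ring.
  - unfold Z.pred.
    rewrite (sumZ_last a (a - 1 + d)), Z.mul_add_distr_l, Hfg in IH.
    replace (a - 1 + d - 1) with (a - 1 + (d + -1)) in IH by ring.
    lia.
Qed.

Definition rhs_cubic (a b : Z) : Z := (a ^ 2 + b ^ 2) * (3 * a - b) * (a + 3 * b).

Lemma rhs_cubic_sub a b :
  rhs_cubic a b - rhs_cubic (b - a) a = 25 * a ^ 4 - 6 * (b ^ 2 - b * a - a ^ 2) ^ 2.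
Proof. unfold rhs_cubic; ring. Qed.

Lemma rhs_cubic_F n : F (2 * n + 1) * L (n - 1) * L (n + 2) = rhs_cubic (F n) (F (n + 1)).
Proof. now rewrite F_double_add1, L_pred, L_add2. Qed.

Theorem corollary1 (n : Z) :
  25 * sumZ 1 n (fun k => F k ^ 4) = F (2 * n + 1) * L (n - 1) * L (n + 2) + 6 * n + 3.
Proof.
  set (g k := F (2 * k + 1) * L (k - 1) * L (k + 2) + 6 * k + 3).
  change (25 * sumZ 1 n (fun k => F k ^ 4) = g n).
  rewrite (sumZ_telescope 25 _ g); [change (g (1 - 1)) with 0; ring |].
  intros k; unfold g; rewrite !rhs_cubic_F.
  replace (k - 1 + 1) with k by ring.
  rewrite F_pred.
  pose proof (rhs_cubic_sub (F k) (F (k + 1))) as Hsub.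
  rewrite cassini_sq in Hsub.
  lia.
Qed.
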